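(* Let $\sigma$ be a completely erasing $k$-block substitution with $w_\epsilon\ne1^k$ that satisfies the optimality condition. Then $f_\sigma$ is Devaney chaotic. That is: (a) there is a point whose $f_\sigma$-orbit is dense in $\mathbb I$; (b) the $f_\sigma$-periodic points are dense in $\mathbb I$; (c) $f_\sigma$ has sensitive dependence on initial conditions.
   Context: Notation: $\mathbb I=[0,1]$. $\{0,1\}^*$ and $\{0,1\}^\omega$ denote finite and infinite binary words, and $\epsilon$ is the empty word. For a word $w$, set $0.w=\sum_iw_i2^{-i}$. For $x\in(0,1]$, $\widetilde x$ is the unique infinite binary expansion of $x$ not ending in $0^\infty$. Fix $k\ge2$. An erasing $k$-block substitution is a map $\sigma:\{0,1\}^k\to\{0,1\}^*$ with exactly one block $w_\epsilon$ such that $\sigma(w_\epsilon)=\epsilon$. $\sigma$ is alternating if there are $\sigma_1,\dots,\sigma_k:\{0,1\}\to\{0,1\}^*$ with $\sigma(b_1\cdots b_k)=\sigma_1(b_1)\cdots\sigma_k(b_k)$. It is then extended to all finite or infinite words by $\sigma(u)=\prod_j\sigma_{((j-1)\bmod k)+1}(u_j)$. $\sigma$ is completely erasing if it is erasing and alternating, and every $w\in\{0,1\}^*$ satisfies $\sigma^n(w)=\epsilon$ for some $n\in\mathbb N$. The map $f_\sigma:\mathbb I\to\mathbb I$ is defined by $f_\sigma(x)=0.\sigma(\widetilde x)$ if $x\in(0,1]$ and $\widetilde x\neq w_\epsilon^\infty$, and $f_\sigma(x)=0$ otherwise. Optimality condition: every $w\in\{0,1\}^\omega$ can be written as $w=\prod_{i\ge1}\sigma(b_i)$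 with blocks $b_i\in\{0,1\}^k$ satisfying $\sigma(b_i)\ne\epsilon$. Sensitive dependence: there is $c>0$ such that for all $x\in\mathbb I$ and $\delta>0$ there exist $z$ with $|x-z|<\delta$ and $n\in\mathbb N$ with $|f_\sigma^n(x)-f_\sigma^n(z)|\ge c$. *)

From Stdlib Require Import Reals List Arith ClassicalEpsilon.
From Coquelicot Require Import Coquelicot.
Import ListNotations.
Open Scope R_scope.

(* Finite binary words are [list bool] (true = 1, false = 0);
   infinite binary words are [nat -> bool] (0-based: w 0 is the first letter). *)

(* An alternating k-block substitution is given by its factors:
   [s i] (for 0 <= i < k) is sigma_{i+1} : {0,1} -> {0,1}^*. On a block of length k this is the block map. *)
Definition sub_fin (k : nat) (s : nat -> bool -> list bool) (u : list bool)
  : list bool :=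
  concat (map (fun j => s (j mod k) (nth j u false)) (seq 0 (length u))).

Definition erasing_with (k : nat) (s : nat -> bool -> list bool) (w : list bool)
  : Prop :=
  length w = k /\
  forall b : list bool, length b = k -> (sub_fin k s b = [] <-> b = w).

Definition eventually_erases (k : nat) (s : nat -> bool -> list bool) : Prop :=
  forall u : list bool, exists n : nat, Nat.iter n (sub_fin k s) u = [].

Definition prefix (u : nat -> bool) (n : nat) : list bool := map u (seq 0 n).

Definition optimal (k : nat) (s : nat -> bool -> list bool) : Prop :=
  forall u : nat -> bool,
    exists b : nat -> list bool,
      (forall i, length (b i) = k /\ sub_fin k s (b i) <> []) /\
      forall n : nat,
        let p := concat (map (fun i => sub_fin k s (b i)) (seq 0 n)) in
        p = prefix u (length p).

(* 0.w for a finite word: sum_i w_i 2^{-i} (1-based i) *)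
Fixpoint fin_val (w : list bool) : R :=
  match w with
  | [] => 0
  | b :: w' => ((if b then 1 else 0) + fin_val w') / 2
  end.

Definition inf_val (w : nat -> bool) : R :=
  Series (fun i => if w i then (/ 2) ^ (S i) else 0).

Definition not_ending_in_zeros (w : nat -> bool) : Prop :=
  forall n : nat, exists m : nat, (n <= m)%nat /\ w m = true.

(* x~ : the (unique, for x in (0,1]) infinite binary expansion of x
   not ending in 0^infinity *)
Definition tilde (x : R) : nat -> bool :=
  epsilon (inhabits (fun _ : nat => true))
          (fun w => not_ending_in_zeros w /\ inf_val w = x).

(* 0.sigma(u) for an infinite word u: sigma(u) may be finite or infinite; its
   value is the limit of the values of sigma applied to the prefixes of u
   (these are exactly the prefixes of sigma(u), a nondecreasing sequence). *)
Definition sub_val (k : nat) (s : nat -> bool -> list bool) (u : nat -> bool)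
  : R :=
  real (Lim_seq (fun n => fin_val (sub_fin k s (prefix u n)))).

Definition periodic_word (k : nat) (w : list bool) : nat -> bool :=
  fun j => nth (j mod k) w false.

(* the map f_sigma : I -> I (extended by 0 outside I) *)
Definition f_sigma (k : nat) (s : nat -> bool -> list bool) (w : list bool)
  (x : R) : R :=
  if excluded_middle_informative
       ((0 < x <= 1) /\ tilde x <> periodic_word k w)
  then sub_val k s (tilde x) else 0.

Definition in_I (x : R) : Prop := 0 <= x <= 1.

Definition dense_orbit (f : R -> R) : Prop :=
  exists x, in_I x /\
    forall y eps, in_I y -> 0 < eps ->
      exists n : nat, Rabs (Nat.iter n f x - y) < eps.

Definition dense_periodic (f : R -> R) : Prop :=
  forall y eps, in_I y -> 0 < eps ->
    exists z, in_I z /\ Rabs (z - y) < eps /\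
      exists p : nat, (1 <= p)%nat /\ Nat.iter p f z = z.

Definition sensitive (f : R -> R) : Prop :=
  exists c, 0 < c /\
    forall x delta, in_I x -> 0 < delta ->
      exists z, in_I z /\ Rabs (x - z) < delta /\
        exists n : nat, c <= Rabs (Nat.iter n f x - Nat.iter n f z).

From Stdlib Require Import Reals List Arith.
From Coquelicot Require Import Coquelicot.
From Stdlib Require Import Lia Lra ClassicalEpsilon Classical FunctionalExtensionality.
Import ListNotations.
Open Scope R_scope.

(* Every point used below has the form x = 0.u where the infinite word u is the limit of a
   chain X_0 <= X_1 <= ... of finite words in the prefix order.  When each level
   sigma^n(X_j) (j -> oo) grows without bound and keeps acquiring new letters 1, the orbit
   of x is computed letterwise: f^N(x) = 0.(lim_j sigma^N(X_j))  (lemma [chain_orbit]).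
   The chains are built from two combinatorial facts about sigma:
   - extension ([iterate_extension]): by optimality, with the erased block w used to
     re-align block boundaries, any word T can be appended to sigma^n(F) by extending F;
   - erasure: every word is eventually erased, and words read along w^oo are erased at once.
   Dense orbit: a chain in which every finite word is a prefix of some sigma^m(X_j).
   Dense periodic points: a chain with X_j <= sigma^p(X_(j+1)) and sigma^p(X_j) <= X_j,
   started at an approximation q of y with sigma^p(q) empty, so that sigma^p fixes the limit.
   Sensitivity: near any x there are points whose m-th images start with 000 and with 111. *)

Definition is_prefix (A B : list bool) : Prop := exists C, B = A ++ C.

Lemma is_prefix_refl A : is_prefix A A.
Proof. exists []. now rewrite app_nil_r. Qed.

Lemma is_prefix_app A B : is_prefix A (A ++ B).
Proof. now exists B. Qed.

Lemma is_prefix_trans A B C : is_prefix A B -> is_prefix B C -> is_prefix A C.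
Proof. intros [D ->] [E ->]. exists (D ++ E). now rewrite app_assoc. Qed.

Lemma is_prefix_length A B : is_prefix A B -> (length A <= length B)%nat.
Proof. intros [D ->]. rewrite length_app. lia. Qed.

Lemma is_prefix_nth A B i :
  is_prefix A B -> (i < length A)%nat -> nth i A false = nth i B false.
Proof. intros [D ->] H. now rewrite app_nth1. Qed.

Lemma is_prefix_of_nth A B : (length A <= length B)%nat ->
  (forall i, (i < length A)%nat -> nth i A false = nth i B false) -> is_prefix A B.
Proof.
  intros Hlen Hnth. exists (skipn (length A) B).
  rewrite <- (firstn_skipn (length A) B) at 1. f_equal.
  apply nth_ext with false false.
  - rewrite length_firstn. lia.
  - intros n Hn. rewrite length_firstn in Hn. rewrite nth_firstn.
    destruct (Nat.ltb_spec n (length A)); [|lia]. symmetry. apply Hnth. lia.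
Qed.

Lemma is_prefix_compare A B Z :
  is_prefix A Z -> is_prefix B Z -> (length A <= length B)%nat -> is_prefix A B.
Proof.
  intros HA HB Hl. apply is_prefix_of_nth; auto.
  intros i Hi. rewrite (is_prefix_nth A Z i HA Hi). symmetry. apply is_prefix_nth; auto. lia.
Qed.

Lemma nth_true_lt (l : list bool) i : nth i l false = true -> (i < length l)%nat.
Proof.
  intros H. destruct (Nat.lt_ge_cases i (length l)) as [h|h]; auto.
  rewrite nth_overflow in H by exact h. discriminate.
Qed.

Lemma one_persists (X Y : list bool) idx :
  is_prefix X Y -> nth idx X false = true -> nth idx Y false = true.
Proof. intros HXY H. rewrite <- (is_prefix_nth X Y idx HXY (nth_true_lt X idx H)). exact H. Qed.

Lemma discrete_ivt (phi : list bool -> nat) (K A : nat) (G : list bool) :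
  (forall G1 b, (phi (G1 ++ [b]) <= phi G1 + K)%nat) ->
  (phi [] <= A)%nat -> (A <= phi G)%nat ->
  exists G1, is_prefix G1 G /\ (A <= phi G1 <= A + K)%nat.
Proof.
  intros Hinc H0. induction G as [|b G IH] using rev_ind; intros HG.
  - exists []. split; [apply is_prefix_refl|lia].
  - destruct (Nat.le_gt_cases A (phi G)) as [Hle|Hgt].
    + destruct (IH Hle) as [G1 [HG1 HA]]. exists G1. split; auto.
      eapply is_prefix_trans; [exact HG1|apply is_prefix_app].
    + exists (G ++ [b]). split; [apply is_prefix_refl|]. specialize (Hinc G b). lia.
Qed.

Lemma combine_requirements (P : list (list bool -> Prop)) F :
  (forall R, In R P ->
     (forall X Y, R X -> is_prefix X Y -> R Y) /\
     (forall X, is_prefix F X -> exists G, R (X ++ G))) ->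
  exists F', is_prefix F F' /\ forall R, In R P -> R F'.
Proof.
  induction P as [|R P IH]; intros HP.
  - exists F. split; [apply is_prefix_refl|]. intros R [].
  - destruct (IH (fun R' HR' => HP R' (or_intror HR'))) as [F1 [HF1 HP1]].
    destruct (HP R (or_introl eq_refl)) as [Hmono Hach].
    destruct (Hach F1 HF1) as [G HG]. exists (F1 ++ G). split.
    + eapply is_prefix_trans; [exact HF1|apply is_prefix_app].
    + intros R' [<-|HR']; auto.
      eapply (proj1 (HP R' (or_intror HR'))); [exact (HP1 R' HR')|apply is_prefix_app].
Qed.

Fixpoint all_words (n : nat) : list (list bool) :=
  match n with
  | O => [[]]
  | S n => map (cons true) (all_words n) ++ map (cons false) (all_words n)
  end.

Lemma all_words_in q : In q (all_words (length q)).
Proof.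
  induction q as [|b q IH]; simpl; [now left|].
  apply in_or_app. destruct b; [left|right]; now apply in_map.
Qed.

Lemma build_sequence (Step : nat -> list bool -> list bool -> Prop) :
  (forall j F, exists F', Step j F F') ->
  forall F0, exists X : nat -> list bool, X 0%nat = F0 /\ forall j, Step j (X j) (X (S j)).
Proof.
  intros Hex F0.
  assert (g : forall j F, {F' | Step j F F'})
    by (intros; apply constructive_indefinite_description; auto).
  exists (fix X j := match j with O => F0 | S j' => proj1_sig (g j' (X j')) end).
  split; [reflexivity|]. intro j. exact (proj2_sig (g j _)).
Qed.

Definition prefix_of_word (X : list bool) (u : nat -> bool) : Prop :=
  forall i, (i < length X)%nat -> nth i X false = u i.

Lemma prefix_of_word_mono A B u : is_prefix A B -> prefix_of_word B u -> prefix_of_word A u.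
Proof.
  intros HAB HB i Hi. rewrite (is_prefix_nth A B i HAB Hi). apply HB.
  apply is_prefix_length in HAB. lia.
Qed.

Lemma length_prefix u m : length (prefix u m) = m.
Proof. unfold prefix. now rewrite length_map, length_seq. Qed.

Lemma nth_prefix (u : nat -> bool) m j : (j < m)%nat -> nth j (prefix u m) false = u j.
Proof.
  intros H. unfold prefix.
  rewrite nth_indep with (d' := u 0%nat) by (rewrite length_map, length_seq; lia).
  rewrite map_nth, seq_nth by lia. reflexivity.
Qed.

Lemma prefix_is_prefix u m n : (m <= n)%nat -> is_prefix (prefix u m) (prefix u n).
Proof.
  intros H. exists (map u (seq m (n - m))). unfold prefix.
  rewrite <- map_app, <- seq_app. f_equal. f_equal. lia.
Qed.

Definition chain (X : nat -> list bool) : Prop := forall j, is_prefix (X j) (X (S j)).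

Definition limit_word (X : nat -> list bool) : nat -> bool :=
  fun i => nth i (X (epsilon (inhabits 0%nat) (fun j => (i < length (X j))%nat))) false.

Definition unbounded (X : nat -> list bool) : Prop :=
  forall L, exists j, (L <= length (X j))%nat.

Definition new_ones (X : nat -> list bool) : Prop :=
  forall N, exists j idx, (N <= idx)%nat /\ nth idx (X j) false = true.

Lemma chain_le X j j' : chain X -> (j <= j')%nat -> is_prefix (X j) (X j').
Proof.
  intros HX Hle. induction Hle; [apply is_prefix_refl|]. eapply is_prefix_trans; eauto.
Qed.

Lemma chain_nth X i j j' : chain X -> (i < length (X j))%nat -> (i < length (X j'))%nat ->
  nth i (X j) false = nth i (X j') false.
Proof.
  intros HX H1 H2. destruct (Nat.le_ge_cases j j') as [h|h].
  - apply is_prefix_nth; auto. apply chain_le; auto.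
  - symmetry. apply is_prefix_nth; auto. apply chain_le; auto.
Qed.

Lemma limit_word_nth X i j : chain X -> (i < length (X j))%nat ->
  limit_word X i = nth i (X j) false.
Proof.
  intros HX Hi. unfold limit_word.
  assert (He : (i < length (X (epsilon (inhabits 0%nat)
                                 (fun j => (i < length (X j))%nat))))%nat).
  { apply epsilon_spec. exists j. exact Hi. }
  apply chain_nth; auto.
Qed.

Lemma chain_prefix_of_limit X j : chain X -> prefix_of_word (X j) (limit_word X).
Proof. intros HX i Hi. symmetry. apply limit_word_nth; auto. Qed.

Lemma prefix_limit_word X j m : chain X -> (m <= length (X j))%nat ->
  prefix (limit_word X) m = firstn m (X j).
Proof.
  intros HX Hm. apply nth_ext with false false.
  - rewrite length_prefix, length_firstn. lia.
  - intros n Hn. rewrite length_prefix in Hn. rewrite nth_prefix, nth_firstn by lia.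
    destruct (Nat.ltb_spec n m); [|lia]. apply limit_word_nth; auto. lia.
Qed.

Lemma new_ones_unbounded X : new_ones X -> unbounded X.
Proof.
  intros H L. destruct (H L) as [j [idx [H1 H2]]]. exists j. apply nth_true_lt in H2. lia.
Qed.

Lemma new_ones_limit X : chain X -> new_ones X -> not_ending_in_zeros (limit_word X).
Proof.
  intros HX H n. destruct (H n) as [j [idx [H1 H2]]]. exists idx. split; auto.
  rewrite (limit_word_nth X idx j HX (nth_true_lt _ _ H2)). exact H2.
Qed.

Definition digit_weight (u : nat -> bool) (i : nat) : R := if u i then (/2) ^ (S i) else 0.

Lemma half_pow_pos n : 0 < (/2) ^ n.
Proof. apply pow_lt. lra. Qed.

Lemma half_pow_antimono a b : (a <= b)%nat -> (/2) ^ b <= (/2) ^ a.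
Proof.
  intros H. replace b with (a + (b - a))%nat by lia. rewrite pow_add.
  assert (Hle1 : (/2) ^ (b - a) <= 1).
  { induction (b - a)%nat; simpl; [lra|]. pose proof (half_pow_pos n). lra. }
  pose proof (half_pow_pos a). nra.
Qed.

Lemma geom_half : is_series (fun i => /2 * (/2) ^ i) 1.
Proof.
  replace 1 with (/2 * / (1 - /2)) by field.
  apply (is_series_scal_l (/2) (fun i => (/2)^i)). apply is_series_geom.
  rewrite Rabs_pos_eq; lra.
Qed.

Lemma ex_digit_weight u : ex_series (digit_weight u).
Proof.
  apply (@ex_series_le R_AbsRing R_CompleteNormedModule) with (fun i => /2 * (/2) ^ i).
  - intro n. change (norm (digit_weight u n)) with (Rabs (digit_weight u n)).
    unfold digit_weight. pose proof (half_pow_pos n).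
    destruct (u n); simpl.
    + rewrite Rabs_pos_eq; nra.
    + rewrite Rabs_R0. nra.
  - exists 1. exact geom_half.
Qed.

Lemma inf_val_cons u : inf_val u = ((if u 0%nat then 1 else 0) + inf_val (fun i => u (S i))) / 2.
Proof.
  unfold inf_val. fold (digit_weight u). fold (digit_weight (fun i => u (S i))).
  rewrite (Series_incr_1 (digit_weight u) (ex_digit_weight u)).
  rewrite (Series_ext (fun k => digit_weight u (S k))
                      (fun k => /2 * digit_weight (fun i => u (S i)) k)).
  - rewrite Series_scal_l. unfold digit_weight at 1. destruct (u 0%nat); simpl; field.
  - intro n. unfold digit_weight. destruct (u (S n)); simpl; ring.
Qed.

Lemma inf_val_in_I u : in_I (inf_val u).
Proof.
  unfold in_I, inf_val. fold (digit_weight u). split.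
  - replace 0 with (Series (fun n => 0 * digit_weight u n)) by (rewrite Series_scal_l; ring).
    apply Series_le; [|apply ex_digit_weight]. intro n. unfold digit_weight.
    pose proof (half_pow_pos (S n)). destruct (u n); lra.
  - rewrite <- (is_series_unique _ _ geom_half).
    apply Series_le; [|exists 1; exact geom_half].
    intro n. unfold digit_weight. pose proof (half_pow_pos n). destruct (u n); simpl; lra.
Qed.

Lemma inf_val_pos u i : u i = true -> 0 < inf_val u.
Proof.
  revert u. induction i; intros u Hu.
  - rewrite inf_val_cons, Hu. pose proof (inf_val_in_I (fun i => u (S i))) as H.
    unfold in_I in H. lra.
  - rewrite inf_val_cons. specialize (IHi (fun i => u (S i)) Hu). destruct (u 0%nat); lra.
Qed.

Definition shift_word (n : nat) (u : nat -> bool) : nat -> bool := fun i => u (n + i)%nat.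

Lemma inf_val_app X u : prefix_of_word X u ->
  inf_val u = fin_val X + (/2) ^ (length X) * inf_val (shift_word (length X) u).
Proof.
  revert u. induction X as [|b X IH]; intros u Hpre.
  - simpl. unfold shift_word. simpl. rewrite Rmult_1_l, Rplus_0_l. reflexivity.
  - rewrite inf_val_cons.
    assert (H0 : u 0%nat = b) by (symmetry; apply (Hpre 0%nat); simpl; lia).
    assert (Hs : prefix_of_word X (fun i => u (S i))).
    { intros i Hi. apply (Hpre (S i)). simpl. lia. }
    rewrite (IH _ Hs), H0. simpl fin_val. simpl length.
    change (shift_word (length X) (fun i => u (S i))) with (shift_word (S (length X)) u).
    simpl pow. field.
Qed.

Lemma inf_val_bounds X u : prefix_of_word X u ->
  fin_val X <= inf_val u <= fin_val X + (/2) ^ (length X).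
Proof.
  intros H. rewrite (inf_val_app X u H).
  pose proof (inf_val_in_I (shift_word (length X) u)). pose proof (half_pow_pos (length X)).
  unfold in_I in *. nra.
Qed.

Lemma not_ending_in_zeros_tail u :
  not_ending_in_zeros u -> not_ending_in_zeros (fun i => u (S i)).
Proof.
  intros H n. destruct (H (S n)) as [m [Hm Hu]]. exists (m - 1)%nat. split; [lia|].
  replace (S (m - 1)) with m by lia. exact Hu.
Qed.

Lemma not_ending_in_zeros_pos u : not_ending_in_zeros u -> 0 < inf_val u.
Proof. intros H. destruct (H 0%nat) as [m [_ Hm]]. exact (inf_val_pos u m Hm). Qed.

Lemma expansion_unique : forall n u u', not_ending_in_zeros u -> not_ending_in_zeros u' ->
  inf_val u = inf_val u' -> u n = u' n.
Proof.
  assert (Hfirst : forall u u', not_ending_in_zeros u -> not_ending_in_zeros u' ->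
    inf_val u = inf_val u' -> u 0%nat = u' 0%nat).
  { intros u u' Hu Hu' He. rewrite inf_val_cons, (inf_val_cons u') in He.
    pose proof (not_ending_in_zeros_pos _ (not_ending_in_zeros_tail u Hu)).
    pose proof (not_ending_in_zeros_pos _ (not_ending_in_zeros_tail u' Hu')).
    pose proof (inf_val_in_I (fun i => u (S i))). pose proof (inf_val_in_I (fun i => u' (S i))).
    unfold in_I in *. destruct (u 0%nat), (u' 0%nat); auto; lra. }
  intro n. induction n; intros u u' Hu Hu' He; [now apply Hfirst|].
  apply (IHn (fun i => u (S i)) (fun i => u' (S i))); try apply not_ending_in_zeros_tail; auto.
  rewrite inf_val_cons, (inf_val_cons u') in He.
  rewrite (Hfirst u u' Hu Hu') in He by (rewrite inf_val_cons, (inf_val_cons u'); exact He).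
  lra.
Qed.

Lemma tilde_inf_val u : not_ending_in_zeros u -> tilde (inf_val u) = u.
Proof.
  intros Hu. unfold tilde.
  assert (H : (fun v => not_ending_in_zeros v /\ inf_val v = inf_val u)
                (epsilon (inhabits (fun _ : nat => true))
                         (fun v => not_ending_in_zeros v /\ inf_val v = inf_val u))).
  { apply epsilon_spec. exists u. auto. }
  destruct H as [H1 H2]. apply functional_extensionality. intro n.
  apply expansion_unique; auto.
Qed.

Lemma dyadic_approx m x : in_I x -> exists X, length X = m /\ Rabs (fin_val X - x) <= (/2) ^ m.
Proof.
  unfold in_I. revert x. induction m; intros x Hx.
  - exists []. split; [reflexivity|]. simpl. unfold Rabs. destruct (Rcase_abs _); lra.
  - destruct (Rle_lt_dec x (/2)) as [h|h].
    + destruct (IHm (2 * x) ltac:(lra)) as [X [HX1 HX2]]. exists (false :: X).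
      split; [simpl; lia|]. simpl fin_val. simpl pow. revert HX2.
      unfold Rabs. destruct (Rcase_abs _); destruct (Rcase_abs _); intros; lra.
    + destruct (IHm (2 * x - 1) ltac:(lra)) as [X [HX1 HX2]]. exists (true :: X).
      split; [simpl; lia|]. simpl fin_val. simpl pow. revert HX2.
      unfold Rabs. destruct (Rcase_abs _); destruct (Rcase_abs _); intros; lra.
Qed.

Lemma extension_close X u x : prefix_of_word X u ->
  Rabs (fin_val X - x) <= (/2) ^ (length X) -> Rabs (inf_val u - x) <= 2 * (/2) ^ (length X).
Proof.
  intros H1 H2. pose proof (inf_val_bounds X u H1). revert H2. unfold Rabs.
  destruct (Rcase_abs _); destruct (Rcase_abs _); intros; lra.
Qed.

Lemma small_dyadic eps : 0 < eps -> exists m, 2 * (/2) ^ m < eps.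
Proof.
  intros He.
  destruct (pow_lt_1_zero (/2) ltac:(rewrite Rabs_pos_eq; lra) (eps/2) ltac:(lra)) as [L HL].
  exists L. specialize (HL L (le_n _)). rewrite Rabs_pos_eq in HL by (apply pow_le; lra). lra.
Qed.

Lemma approximating_word y eps : in_I y -> 0 < eps ->
  exists q, forall u, prefix_of_word q u -> Rabs (inf_val u - y) < eps.
Proof.
  intros Hy Heps. destruct (small_dyadic eps Heps) as [L HL].
  destruct (dyadic_approx L y Hy) as [q [Hq1 Hq2]]. exists q. intros u Hu.
  rewrite <- Hq1 in Hq2. pose proof (extension_close q u y Hu Hq2). rewrite Hq1 in H. lra.
Qed.

Lemma list_sum_in l x : In x l -> (x <= list_sum l)%nat.
Proof.
  induction l; simpl; intros H; [easy|].
  destruct H; subst; [lia|]. specialize (IHl H). lia.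
Qed.

Lemma concat_length_ge (f : nat -> list bool) a n :
  (forall i, f i <> []) -> (n <= length (concat (map f (seq a n))))%nat.
Proof.
  intros Hf. revert a. induction n; intro a; simpl; [lia|]. rewrite length_app.
  specialize (IHn (S a)). destruct (f a) eqn:E; [now elim (Hf a)|]. simpl. lia.
Qed.

Lemma pow_ge_1 m p : (1 <= m)%nat -> (1 <= m ^ p)%nat.
Proof. intros H. induction p; simpl; nia. Qed.

Section Dynamics.

Variable k : nat.
Variable s : nat -> bool -> list bool.
Hypothesis k_pos : (0 < k)%nat.

(* sigma applied to a word whose first letter sits at position o of the infinite word:
   the letter at position j is substituted by sigma_((j mod k)+1). *)
Fixpoint subst_at (o : nat) (X : list bool) : list bool :=
  match X with
  | [] => []
  | b :: X' => s (o mod k) b ++ subst_at (S o) X'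
  end.

Definition subst_iter (n : nat) (X : list bool) : list bool := Nat.iter n (subst_at 0) X.

Lemma sub_fin_subst_at_from X o :
  concat (map (fun j => s ((o + j) mod k) (nth j X false)) (seq 0 (length X))) = subst_at o X.
Proof.
  revert o. induction X as [|b X IH]; intro o; [reflexivity|].
  simpl length. simpl seq. simpl map. simpl concat. rewrite Nat.add_0_r. simpl subst_at.
  f_equal. rewrite <- seq_shift, map_map. rewrite <- (IH (S o)). f_equal. apply map_ext.
  intro j. simpl nth. f_equal. f_equal. lia.
Qed.

Lemma sub_fin_subst_at X : sub_fin k s X = subst_at 0 X.
Proof. unfold sub_fin. exact (sub_fin_subst_at_from X 0). Qed.

Lemma iter_sub_fin n X : Nat.iter n (sub_fin k s) X = subst_iter n X.
Proof. induction n; [reflexivity|]. simpl. rewrite IHn, sub_fin_subst_at. reflexivity. Qed.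

Lemma subst_at_app o A B : subst_at o (A ++ B) = subst_at o A ++ subst_at (o + length A) B.
Proof.
  revert o. induction A as [|b A IH]; intro o; simpl.
  - now rewrite Nat.add_0_r.
  - rewrite IH, app_assoc. replace (o + S (length A))%nat with (S o + length A)%nat by lia.
    reflexivity.
Qed.

Lemma subst_at_mod X o o' : o mod k = o' mod k -> subst_at o X = subst_at o' X.
Proof.
  revert o o'. induction X as [|b X IH]; intros o o' H; simpl; auto.
  rewrite H. f_equal. apply IH.
  replace (S o) with (1 + o)%nat by lia. replace (S o') with (1 + o')%nat by lia.
  rewrite <- (Nat.Div0.add_mod_idemp_r 1 o), <- (Nat.Div0.add_mod_idemp_r 1 o'), H.
  reflexivity.
Qed.

Lemma subst_at_nil_iff X o : subst_at o X = [] <->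
  forall j, (j < length X)%nat -> s ((o + j) mod k) (nth j X false) = [].
Proof.
  revert o. induction X as [|b X IH]; intros o; simpl; split.
  - intros; lia.
  - reflexivity.
  - intros H j Hj. apply app_eq_nil in H as [H1 H2]. destruct j.
    + now rewrite Nat.add_0_r.
    + replace (o + S j)%nat with (S o + j)%nat by lia. apply IH; auto. lia.
  - intros H. pose proof (H 0%nat ltac:(lia)) as H0. rewrite Nat.add_0_r in H0. simpl in H0.
    rewrite H0. simpl. apply IH. intros j Hj.
    replace (S o + j)%nat with (o + S j)%nat by lia. apply (H (S j)). lia.
Qed.

Lemma subst_at_mono o A B : is_prefix A B -> is_prefix (subst_at o A) (subst_at o B).
Proof. intros [C ->]. rewrite subst_at_app. apply is_prefix_app. Qed.

Lemma subst_iter_S n X : subst_iter (S n) X = subst_iter n (subst_at 0 X).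
Proof. unfold subst_iter. apply Nat.iter_succ_r. Qed.

Lemma subst_iter_add a b X : subst_iter (a + b) X = subst_iter a (subst_iter b X).
Proof. unfold subst_iter. apply Nat.iter_add. Qed.

Lemma subst_iter_mono n A B : is_prefix A B -> is_prefix (subst_iter n A) (subst_iter n B).
Proof.
  revert A B. induction n; intros A B H; [exact H|].
  rewrite !subst_iter_S. apply IHn. now apply subst_at_mono.
Qed.

Lemma subst_iter_nil n : subst_iter n [] = [].
Proof. induction n; [reflexivity|]. rewrite subst_iter_S. exact IHn. Qed.

Lemma chain_subst_iter n X : chain X -> chain (fun j => subst_iter n (X j)).
Proof. intros HX j. apply subst_iter_mono, HX. Qed.

Lemma subst_at_concat (b : nat -> list bool) a n : (forall i, length (b i) = k) ->
  subst_at 0 (concat (map b (seq a n))) = concat (map (fun i => sub_fin k s (b i)) (seq a n)).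
Proof.
  intros Hb. revert a. induction n; intro a; simpl; auto.
  rewrite subst_at_app, Hb, sub_fin_subst_at. f_equal. rewrite <- IHn. apply subst_at_mod.
  simpl. rewrite Nat.Div0.mod_same, Nat.Div0.mod_0_l. reflexivity.
Qed.

Definition image_bound : nat :=
  S (list_sum (map (fun i => length (s i true) + length (s i false))%nat (seq 0 k))).

Lemma image_bound_letter o b : (length (s (o mod k) b) <= image_bound)%nat.
Proof.
  unfold image_bound.
  assert (H : In (length (s (o mod k) true) + length (s (o mod k) false))%nat
            (map (fun i => length (s i true) + length (s i false))%nat (seq 0 k))).
  { apply in_map_iff. exists (o mod k)%nat. split; [reflexivity|]. apply in_seq.
    pose proof (Nat.mod_upper_bound o k ltac:(lia)). lia. }
  apply list_sum_in in H. destruct b; lia.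
Qed.

Lemma subst_at_length o X : (length (subst_at o X) <= image_bound * length X)%nat.
Proof.
  revert o. induction X as [|b X IH]; intro o; cbn [subst_at length]; [lia|].
  rewrite length_app. pose proof (image_bound_letter o b). specialize (IH (S o)). nia.
Qed.

Lemma subst_iter_length_app p X Y :
  (length (subst_iter p (X ++ Y)) <= length (subst_iter p X) + image_bound ^ p * length Y)%nat.
Proof.
  revert X Y. induction p; intros X Y.
  - simpl. rewrite length_app. lia.
  - rewrite !subst_iter_S, subst_at_app. eapply Nat.le_trans; [apply IHp|].
    pose proof (subst_at_length (0 + length X) Y). rewrite Nat.pow_succ_r'.
    set (M := image_bound) in *. set (Q := (M ^ p)%nat) in *. nia.
Qed.

Lemma subst_iter_length p X : (length (subst_iter p X) <= image_bound ^ p * length X)%nat.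
Proof.
  pose proof (subst_iter_length_app p [] X) as H.
  rewrite app_nil_l, subst_iter_nil in H. simpl length in H. lia.
Qed.

Lemma image_bound_pow_pos p : (1 <= image_bound ^ p)%nat.
Proof. apply pow_ge_1. unfold image_bound. lia. Qed.


Lemma align_to_block o : ((o + (k - o mod k)) mod k = 0 mod k)%nat.
Proof.
  pose proof (Nat.div_mod_eq o k). pose proof (Nat.mod_upper_bound o k ltac:(lia)).
  set (q := (o / k)%nat) in *. set (r := (o mod k)%nat) in *.
  replace (o + (k - r))%nat with ((q + 1) * k)%nat by nia.
  rewrite Nat.Div0.mod_mul, Nat.Div0.mod_0_l. reflexivity.
Qed.

Variable w : list bool.
Hypothesis erasing : erasing_with k s w.

Lemma erased_letter o : s (o mod k) (nth (o mod k) w false) = [].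
Proof.
  destruct erasing as [Hlw Her].
  assert (H : subst_at 0 w = []) by (rewrite <- sub_fin_subst_at; now apply Her).
  pose proof (proj1 (subst_at_nil_iff w 0) H (o mod k)) as H1.
  rewrite Nat.add_0_l, Nat.Div0.mod_mod in H1. apply H1.
  rewrite Hlw. apply Nat.mod_upper_bound. lia.
Qed.

Fixpoint erased_pattern (o n : nat) : list bool :=
  match n with
  | O => []
  | S n => nth (o mod k) w false :: erased_pattern (S o) n
  end.

Lemma erased_pattern_length o n : length (erased_pattern o n) = n.
Proof. revert o; induction n; intro o; simpl; auto. Qed.

Lemma erased_pattern_nth o n j : (j < n)%nat ->
  nth j (erased_pattern o n) false = nth ((o + j) mod k) w false.
Proof.
  revert o j; induction n; intros o j Hj; [lia|]. destruct j; simpl.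
  - now rewrite Nat.add_0_r.
  - rewrite IHn by lia. replace (S o + j)%nat with (o + S j)%nat by lia. reflexivity.
Qed.

Lemma erased_pattern_erased o n : subst_at o (erased_pattern o n) = [].
Proof. revert o; induction n; intro o; simpl; auto. rewrite erased_letter. apply IHn. Qed.

Lemma prefix_erased_pattern_erased o n P :
  is_prefix P (erased_pattern o n) -> subst_at o P = [].
Proof.
  intros [C HC]. pose proof (erased_pattern_erased o n) as H.
  rewrite HC, subst_at_app in H. now apply app_eq_nil in H.
Qed.

Lemma erased_suffix p X P : (1 <= p)%nat -> subst_at (length X) P = [] ->
  subst_iter p (X ++ P) = subst_iter p X.
Proof.
  intros Hp HP. destruct p as [|p]; [lia|].
  rewrite !subst_iter_S, subst_at_app. simpl. rewrite HP, app_nil_r. reflexivity.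
Qed.

Lemma erased_word_with_one : (exists i0, (i0 < k)%nat /\ nth i0 w false = true) ->
  forall o, exists E, subst_at o E = [] /\
    exists j, (j < length E)%nat /\ nth j E false = true.
Proof.
  intros [i0 [Hi0 Hw]] o. exists (erased_pattern o (2 * k)).
  split; [apply erased_pattern_erased|].
  exists (k - o mod k + i0)%nat. pose proof (Nat.mod_upper_bound o k ltac:(lia)).
  rewrite erased_pattern_length. split; [lia|]. rewrite erased_pattern_nth by lia.
  replace (o + (k - o mod k + i0))%nat with ((o + (k - o mod k)) + i0)%nat by lia.
  rewrite <- Nat.Div0.add_mod_idemp_l, align_to_block. rewrite Nat.Div0.mod_0_l. simpl.
  rewrite Nat.mod_small by lia. exact Hw.
Qed.

Lemma zeros_erased : ~ (exists i0, (i0 < k)%nat /\ nth i0 w false = true) ->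
  forall o, s (o mod k) false = [].
Proof.
  intros Hnone o. pose proof (erased_letter o). destruct (nth (o mod k) w false) eqn:E; auto.
  exfalso. apply Hnone. exists (o mod k)%nat. split; auto. apply Nat.mod_upper_bound. lia.
Qed.

Hypothesis optimality : optimal k s.

Lemma optimal_preimage_aligned T : exists T0, is_prefix T (subst_at 0 T0).
Proof.
  destruct (optimality (fun i => nth i T false)) as [b [Hb Hp]].
  set (n := length T). specialize (Hp n). simpl in Hp.
  set (P := concat (map (fun i => sub_fin k s (b i)) (seq 0 n))) in *.
  exists (concat (map b (seq 0 n))). rewrite subst_at_concat by (intro i; apply Hb).
  fold P. assert (Hl : (n <= length P)%nat).
  { apply concat_length_ge. intro i. apply Hb. }
  apply is_prefix_of_nth; [exact Hl|]. intros i Hi.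
  rewrite Hp, nth_prefix by lia. reflexivity.
Qed.

(* The same at any position: first pad with erased letters up to a block boundary. *)
Lemma optimal_preimage o T : exists T', is_prefix T (subst_at o T').
Proof.
  destruct (optimal_preimage_aligned T) as [T0 HT0].
  exists (erased_pattern o (k - o mod k) ++ T0).
  rewrite subst_at_app, erased_pattern_erased, erased_pattern_length. simpl.
  rewrite (subst_at_mod T0 _ 0); [exact HT0|apply align_to_block].
Qed.

Lemma iterate_extension n F T : exists G, is_prefix (subst_iter n F ++ T) (subst_iter n (F ++ G)).
Proof.
  revert F T. induction n; intros F T.
  - exists T. apply is_prefix_refl.
  - destruct (optimal_preimage (length (subst_iter n F)) T) as [T' HT'].
    destruct (IHn F T') as [G [C HC]]. exists G.
    change (subst_iter (S n) F) with (subst_at 0 (subst_iter n F)).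
    change (subst_iter (S n) (F ++ G)) with (subst_at 0 (subst_iter n (F ++ G))).
    rewrite HC, <- app_assoc, !subst_at_app. simpl.
    destruct HT' as [D HD]. rewrite HD.
    exists (D ++ subst_at (length (subst_iter n F) + length T') C). now rewrite !app_assoc.
Qed.

Lemma preimage_up_to_erased o o' H' :
  exists G P, subst_at o G = H' ++ P /\ subst_at o' P = [].
Proof.
  set (Pad := erased_pattern o' image_bound).
  destruct (optimal_preimage o (H' ++ Pad)) as [T' HT'].
  destruct (discrete_ivt (fun G1 => length (subst_at o G1)) image_bound (length H') T')
    as [G1 [HG1 HA]].
  - intros G1 b. rewrite subst_at_app, length_app.
    pose proof (subst_at_length (o + length G1) [b]). simpl length in *. lia.
  - simpl. lia.
  - apply is_prefix_length in HT'. rewrite length_app in HT'. unfold Pad in HT'.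
    rewrite erased_pattern_length in HT'. lia.
  - assert (Hupper : is_prefix (subst_at o G1) (H' ++ Pad)).
    { apply is_prefix_compare with (subst_at o T'); auto. apply subst_at_mono; auto.
      rewrite length_app. unfold Pad. rewrite erased_pattern_length. lia. }
    assert (Hlower : is_prefix H' (subst_at o G1)).
    { apply is_prefix_compare with (subst_at o T').
      - eapply is_prefix_trans; [apply is_prefix_app|exact HT'].
      - apply subst_at_mono; auto.
      - lia. }
    destruct Hlower as [P HP]. exists G1, P. split; [exact HP|].
    rewrite HP in Hupper. destruct Hupper as [C HC].
    rewrite <- app_assoc in HC. apply app_inv_head in HC.
    apply prefix_erased_pattern_erased with image_bound. exists C. exact HC.
Qed.

Definition new_one_at_level (n : nat) (F F' : list bool) : Prop :=
  exists idx, (length (subst_iter n F) <= idx)%nat /\ nth idx (subst_iter n F') false = true.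

Lemma new_one_at_level_mono n F X Y :
  new_one_at_level n F X -> is_prefix X Y -> new_one_at_level n F Y.
Proof.
  intros [idx [H1 H2]] HXY. exists idx. split; auto.
  eapply one_persists; [apply subst_iter_mono; eauto|exact H2].
Qed.

Definition w_has_one : Prop := exists i0, (i0 < k)%nat /\ nth i0 w false = true.

Lemma silent_extension_with_ones : w_has_one -> forall p F, exists H,
  subst_iter p (F ++ H) = subst_iter p F /\
  forall n, (n < p)%nat -> new_one_at_level n F (F ++ H).
Proof.
  intros Hone p. induction p as [|p IH]; intros F.
  - exists []. rewrite app_nil_r. split; [reflexivity|intros; lia].
  - destruct (IH (subst_at 0 F)) as [H' [HH' Hones']].
    destruct p as [|p].
    + destruct (erased_word_with_one Hone (length F)) as [E [HE [j [Hj HEj]]]].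
      exists E. split.
      * change (subst_at 0 (F ++ E) = subst_at 0 F).
        rewrite subst_at_app, Nat.add_0_l, HE, app_nil_r. reflexivity.
      * intros n Hn. replace n with 0%nat by lia. exists (length F + j)%nat.
        change (subst_iter 0 ?X) with X. split; [lia|].
        rewrite app_nth2 by lia. replace (length F + j - length F)%nat with j by lia. exact HEj.
    + destruct (preimage_up_to_erased (length F) (length (subst_at 0 F) + length H') H')
        as [G [P [HG HP]]].
      destruct (erased_word_with_one Hone (length F + length G)) as [E [HE [j [Hj HEj]]]].
      assert (Himage : subst_at 0 (F ++ G ++ E) = (subst_at 0 F ++ H') ++ P).
      { rewrite !subst_at_app, Nat.add_0_l, HE, app_nil_r, HG, app_assoc. reflexivity. }
      exists (G ++ E). split.
      * rewrite subst_iter_S, Himage, erased_suffix by (rewrite ?length_app; auto; lia).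
        rewrite HH'. rewrite <- subst_iter_S. reflexivity.
      * intros [|n] Hn.
        -- exists (length F + length G + j)%nat. change (subst_iter 0 ?X) with X.
           split; [lia|]. rewrite app_assoc, app_nth2 by (rewrite length_app; lia).
           rewrite length_app. replace (length F + length G + j - (length F + length G))%nat
             with j by lia. exact HEj.
        -- unfold new_one_at_level. rewrite !subst_iter_S, Himage.
           apply new_one_at_level_mono with (subst_at 0 F ++ H'); [|apply is_prefix_app].
           apply Hones'. lia.
Qed.

Lemma silent_extension p F : exists H,
  subst_iter p (F ++ H) = subst_iter p F /\
  (w_has_one -> forall n, (n < p)%nat -> new_one_at_level n F (F ++ H)).
Proof.
  destruct (classic w_has_one) as [Hone|Hnone].
  - destruct (silent_extension_with_ones Hone p F) as [H [H1 H2]]. exists H. auto.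
  - exists []. rewrite app_nil_r. split; auto. intro; contradiction.
Qed.

Definition periodic_step_rel (p : nat) (F F' : list bool) : Prop :=
  is_prefix F (subst_iter p F') /\ is_prefix (subst_iter p F') F' /\
  (length F < length F')%nat /\
  (w_has_one -> forall n, (n < p)%nat -> new_one_at_level n F F').

Lemma periodic_step p F : (1 <= p)%nat -> is_prefix (subst_iter p F) F ->
  exists F', periodic_step_rel p F F'.
Proof.
  intros Hp Hinv. destruct (silent_extension p F) as [H [HH Hones]].
  (* F2 = F H w^oo has the same p-th image as F and is long enough to contain F' below *)
  set (F1 := F ++ H). set (F2 := F1 ++ erased_pattern (length F1) (image_bound ^ p)).
  assert (HF2 : subst_iter p F2 = subst_iter p F).
  { unfold F2. rewrite erased_suffix, <- HH; auto. apply erased_pattern_erased. }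
  assert (HFF2 : is_prefix F F2). { unfold F2, F1. rewrite <- app_assoc. apply is_prefix_app. }
  assert (HlF2 : length F2 = (length F + length H + image_bound ^ p)%nat).
  { unfold F2, F1. rewrite !length_app, erased_pattern_length. lia. }
  destruct (is_prefix_trans _ _ _ Hinv HFF2) as [T HT]. rewrite <- HF2 in HT.
  (* sigma^p(F2 G) starts with F2, and a prefix G1 of G cuts it right after F *)
  destruct (iterate_extension p F2 T) as [G HG]. rewrite <- HT in HG.
  destruct (discrete_ivt (fun G1 => length (subst_iter p (F2 ++ G1))) (image_bound ^ p)
                         (length F) G) as [G1 [HG1 HA]].
  - intros G1 b. rewrite app_assoc.
    pose proof (subst_iter_length_app p (F2 ++ G1) [b]). simpl length in *. lia.
  - simpl. rewrite app_nil_r, HF2. now apply is_prefix_length.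
  - apply is_prefix_length in HG. apply is_prefix_length in HFF2. lia.
  - exists (F2 ++ G1).
    assert (HZ : is_prefix (subst_iter p (F2 ++ G1)) (subst_iter p (F2 ++ G))).
    { apply subst_iter_mono. destruct HG1 as [C ->]. rewrite app_assoc. apply is_prefix_app. }
    pose proof (image_bound_pow_pos p).
    split; [|split; [|split]].
    + apply is_prefix_compare with (subst_iter p (F2 ++ G)); auto.
      eapply is_prefix_trans; eauto. lia.
    + eapply is_prefix_trans; [|apply is_prefix_app].
      apply is_prefix_compare with (subst_iter p (F2 ++ G)); auto. lia.
    + rewrite length_app. lia.
    + intros Hone n Hn. apply (new_one_at_level_mono n F (F ++ H)); [now apply Hones|].
      unfold F2, F1. rewrite <- app_assoc. apply is_prefix_app.
Qed.

Hypothesis erases : eventually_erases k s.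

Lemma erased_after X : exists m, forall m', (m <= m')%nat -> subst_iter m' X = [].
Proof.
  destruct (erases X) as [m Hm]. rewrite iter_sub_fin in Hm. exists m. intros m' Hm'.
  replace m' with ((m' - m) + m)%nat by lia. rewrite subst_iter_add, Hm. apply subst_iter_nil.
Qed.

Definition dense_step (j : nat) (F F' : list bool) : Prop :=
  is_prefix F F' /\
  (forall n, (n <= j)%nat -> new_one_at_level n F F') /\
  (forall q, length q = j -> exists m, is_prefix q (subst_iter m F')).

Lemma dense_step_exists j F : exists F', dense_step j F F'.
Proof.
  set (NewOne := fun n X => new_one_at_level n F X).
  set (Visits := fun q X => exists m, is_prefix q (subst_iter m X)).
  destruct (combine_requirements
              (map NewOne (seq 0 (S j)) ++ map Visits (all_words j)) F) as [F' [HF' HR]].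
  - intros R HR. apply in_app_or in HR.
    destruct HR as [HR|HR]; apply in_map_iff in HR; destruct HR as [a [<- Ha]]; split.
    + intros X Y HX HXY. exact (new_one_at_level_mono a F X Y HX HXY).
    + (* append a letter 1 to sigma^a(X) *)
      intros X HX. destruct (iterate_extension a X [true]) as [G HG]. exists G.
      exists (length (subst_iter a X)). split.
      * apply is_prefix_length, subst_iter_mono, HX.
      * apply one_persists with (subst_iter a X ++ [true]); auto.
        rewrite app_nth2, Nat.sub_diag by lia. reflexivity.
    + intros X Y [m Hm] HXY. exists m. eapply is_prefix_trans; [exact Hm|].
      apply subst_iter_mono; auto.
    + (* once X is erased, append the word a after sigma^m(X) = [] *)
      intros X HX. destruct (erased_after X) as [m Hm].
      destruct (iterate_extension m X a) as [G HG]. exists G, m.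
      rewrite Hm in HG by lia. exact HG.
  - exists F'. split; [exact HF'|split].
    + intros n Hn. apply (HR (NewOne n)). apply in_or_app. left. apply in_map_iff.
      exists n. split; auto. apply in_seq. lia.
    + intros q Hq. apply (HR (Visits q)). apply in_or_app. right. apply in_map_iff.
      exists q. split; auto. rewrite <- Hq. apply all_words_in.
Qed.

Definition image_word (u v : nat -> bool) : Prop :=
  (forall m, prefix_of_word (sub_fin k s (prefix u m)) v) /\
  (forall L, exists m, (L <= length (sub_fin k s (prefix u m)))%nat).

Lemma image_of_limit X : chain X -> unbounded X -> unbounded (fun j => subst_at 0 (X j)) ->
  image_word (limit_word X) (limit_word (fun j => subst_at 0 (X j))).
Proof.
  intros HX HuX HuY.
  assert (HY : chain (fun j => subst_at 0 (X j))) by exact (chain_subst_iter 1 X HX).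
  split.
  - intros m. destruct (HuX m) as [j Hj].
    rewrite (prefix_limit_word X j m HX Hj), sub_fin_subst_at.
    apply prefix_of_word_mono with (subst_at 0 (X j)).
    + apply subst_at_mono. exists (skipn m (X j)). symmetry. apply firstn_skipn.
    + apply (chain_prefix_of_limit (fun j => subst_at 0 (X j)) j HY).
  - intros L. destruct (HuY L) as [j Hj]. exists (length (X j)).
    rewrite (prefix_limit_word X j _ HX (le_n _)), firstn_all, sub_fin_subst_at. exact Hj.
Qed.

Lemma sub_val_image u v : image_word u v -> sub_val k s u = inf_val v.
Proof.
  intros [Hpre Hunb]. unfold sub_val.
  assert (Hl : is_lim_seq (fun n => fin_val (sub_fin k s (prefix u n))) (inf_val v)).
  { apply is_lim_seq_spec. intros eps.
    destruct (pow_lt_1_zero (/2) ltac:(rewrite Rabs_pos_eq; lra) eps (cond_pos eps)) as [L HL].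
    destruct (Hunb L) as [m0 Hm0]. exists m0. intros n Hn.
    assert (HLn : (L <= length (sub_fin k s (prefix u n)))%nat).
    { eapply Nat.le_trans; [exact Hm0|]. rewrite !sub_fin_subst_at.
      apply is_prefix_length, subst_at_mono, prefix_is_prefix. lia. }
    pose proof (inf_val_bounds _ _ (Hpre n)). pose proof (half_pow_antimono _ _ HLn).
    specialize (HL L (le_n _)). rewrite Rabs_pos_eq in HL by (apply pow_le; lra).
    rewrite Rabs_minus_sym, Rabs_pos_eq; lra. }
  rewrite (is_lim_seq_unique _ _ Hl). reflexivity.
Qed.

(* f_sigma acts on 0.u as sigma acts on u, as soon as u does not end in 0^oo and sigma(u)
   is infinite (which excludes u = w^oo). *)
Lemma f_sigma_image u v : not_ending_in_zeros u -> image_word u v ->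
  f_sigma k s w (inf_val u) = inf_val v.
Proof.
  intros Hu Himg. unfold f_sigma.
  destruct (excluded_middle_informative _) as [Hc|Hc].
  - rewrite tilde_inf_val by auto. now apply sub_val_image.
  - exfalso. apply Hc.
    split; [split; [now apply not_ending_in_zeros_pos|apply inf_val_in_I]|].
    rewrite tilde_inf_val by auto. intro Hper. destruct Himg as [_ Hunb].
    destruct (Hunb 1%nat) as [m Hm]. rewrite sub_fin_subst_at in Hm.
    rewrite (proj2 (subst_at_nil_iff _ 0)) in Hm; [simpl in Hm; lia|].
    intros j Hj. rewrite length_prefix in Hj. rewrite nth_prefix, Hper by lia.
    apply erased_letter.
Qed.

Lemma chain_orbit X N : chain X ->
  (forall n, (n < N)%nat ->
     new_ones (fun j => subst_iter n (X j)) /\ unbounded (fun j => subst_iter (S n) (X j))) ->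
  Nat.iter N (f_sigma k s w) (inf_val (limit_word X)) =
  inf_val (limit_word (fun j => subst_iter N (X j))).
Proof.
  intros HX H. induction N; [reflexivity|].
  simpl. rewrite IHN by (intros; apply H; lia). destruct (H N ltac:(lia)) as [Hg Hu].
  apply f_sigma_image.
  - apply new_ones_limit; auto. apply chain_subst_iter; auto.
  - apply (image_of_limit (fun j => subst_iter N (X j))); auto.
    + apply chain_subst_iter; auto.
    + now apply new_ones_unbounded.
Qed.

Lemma new_ones_of_steps (Y : nat -> list bool) :
  (forall j, exists idx, (length (Y j) <= idx)%nat /\ nth idx (Y (S j)) false = true) ->
  new_ones Y.
Proof.
  intros Hstep.
  assert (Hlen : forall t, (t <= length (Y t))%nat).
  { induction t; [lia|]. destruct (Hstep t) as [idx [Hi Hn]]. apply nth_true_lt in Hn. lia. }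
  intros N. destruct (Hstep N) as [idx [Hi Hn]]. exists (S N), idx. split; auto.
  specialize (Hlen N). lia.
Qed.

(* If all letters 0 are erased, a sequence whose images grow without bound keeps
   acquiring ones: letters 0 contribute nothing to the images. *)
Lemma new_ones_of_growing_images (Y : nat -> list bool) :
  (forall o, s (o mod k) false = []) -> unbounded (fun j => subst_at 0 (Y j)) -> new_ones Y.
Proof.
  intros Hzero Hunb N. destruct (Hunb (image_bound * N + 1)%nat) as [j Hj]. exists j.
  destruct (classic (exists idx, (N <= idx)%nat /\ nth idx (Y j) false = true)) as [H|H];
    [exact H|exfalso].
  rewrite <- (firstn_skipn N (Y j)), subst_at_app in Hj.
  rewrite (proj2 (subst_at_nil_iff (skipn N (Y j)) _)), app_nil_r in Hj.
  - pose proof (subst_at_length 0 (firstn N (Y j))). rewrite length_firstn in H0. nia.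
  - intros jj Hjj. rewrite nth_skipn.
    destruct (nth (N + jj) (Y j) false) eqn:E; [|apply Hzero].
    exfalso. apply H. exists (N + jj)%nat. split; [lia|exact E].
Qed.

(* Growth passes down the levels: sigma^p(Y) is at most image_bound^(p-n) times longer than
   sigma^n(Y). *)
Lemma unbounded_lower_level (X : nat -> list bool) p n : (n <= p)%nat ->
  unbounded (fun j => subst_iter p (X j)) -> unbounded (fun j => subst_iter n (X j)).
Proof.
  intros Hn Hunb L. destruct (Hunb (image_bound ^ (p - n) * L)%nat) as [j Hj]. exists j.
  pose proof (subst_iter_length (p - n) (subst_iter n (X j))) as H.
  rewrite <- subst_iter_add in H. replace (p - n + n)%nat with p in H by lia.
  pose proof (image_bound_pow_pos (p - n)).
  set (M := (image_bound ^ (p - n))%nat) in *. nia.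
Qed.

Lemma dense_chain_new_ones X : (forall j, dense_step j (X j) (X (S j))) ->
  chain X /\ forall n, new_ones (fun j => subst_iter n (X j)).
Proof.
  intros HS. split; [intro j; apply (HS j)|]. intros n N.
  destruct (new_ones_of_steps (fun t => subst_iter n (X (n + t)%nat))) with N
    as [j [idx H]].
  - intros t. destruct (HS (n + t)%nat) as [_ [Hones _]]. rewrite Nat.add_succ_r.
    apply Hones. lia.
  - exists (n + j)%nat, idx. exact H.
Qed.

Lemma dense_chain_orbit X N : (forall j, dense_step j (X j) (X (S j))) ->
  Nat.iter N (f_sigma k s w) (inf_val (limit_word X)) =
  inf_val (limit_word (fun j => subst_iter N (X j))).
Proof.
  intros HS. destruct (dense_chain_new_ones X HS) as [HX Hnew].
  apply chain_orbit; auto. intros n _. split; auto. apply new_ones_unbounded, Hnew.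
Qed.

Theorem f_sigma_dense_orbit : dense_orbit (f_sigma k s w).
Proof.
  destruct (build_sequence dense_step dense_step_exists []) as [X [_ HS]].
  destruct (dense_chain_new_ones X HS) as [HX _].
  exists (inf_val (limit_word X)). split; [apply inf_val_in_I|]. intros y eps Hy Heps.
  destruct (approximating_word y eps Hy Heps) as [q Hq].
  destruct (proj2 (proj2 (HS (length q))) q eq_refl) as [m Hm]. exists m.
  rewrite dense_chain_orbit by exact HS. apply Hq.
  eapply prefix_of_word_mono; [exact Hm|].
  apply (chain_prefix_of_limit (fun j => subst_iter m (X j))), chain_subst_iter, HX.
Qed.

Lemma prescribed_images_nearby x delta : in_I x -> 0 < delta ->
  exists m, forall T, exists z, in_I z /\ Rabs (x - z) < delta /\
    exists v, prefix_of_word T v /\ Nat.iter m (f_sigma k s w) z = inf_val v.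
Proof.
  intros Hx Hd. destruct (approximating_word x delta Hx Hd) as [q Hq].
  destruct (erased_after q) as [m Hm]. exists m. intro T.
  (* sigma^m(q) is empty, so extending q lets sigma^m start with T *)
  destruct (iterate_extension m q T) as [G HG]. rewrite (Hm m (le_n _)) in HG.
  destruct (build_sequence dense_step dense_step_exists (q ++ G)) as [X [HX0 HS]].
  destruct (dense_chain_new_ones X HS) as [HX _].
  exists (inf_val (limit_word X)). split; [apply inf_val_in_I|]. split.
  - rewrite Rabs_minus_sym. apply Hq.
    apply prefix_of_word_mono with (q ++ G); [apply is_prefix_app|].
    rewrite <- HX0. apply chain_prefix_of_limit; auto.
  - exists (limit_word (fun j => subst_iter m (X j))). split.
    + eapply prefix_of_word_mono; [exact HG|]. rewrite <- HX0.
      apply (chain_prefix_of_limit (fun j => subst_iter m (X j))), chain_subst_iter, HX.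
    + apply dense_chain_orbit, HS.
Qed.

(* Sensitivity with constant 1/4: images starting with 000 and with 111 lie in [0, 1/8] and
   [7/8, 1], so one of them is at distance at least 1/4 from f^m(x). *)
Theorem f_sigma_sensitive : sensitive (f_sigma k s w).
Proof.
  exists (1/4). split; [lra|]. intros x delta Hx Hd.
  destruct (prescribed_images_nearby x delta Hx Hd) as [m Hm].
  destruct (Hm [true; true; true]) as [z1 [Hz1 [Hd1 [v1 [Hv1 He1]]]]].
  destruct (Hm [false; false; false]) as [z0 [Hz0 [Hd0 [v0 [Hv0 He0]]]]].
  pose proof (inf_val_bounds _ _ Hv1) as B1. pose proof (inf_val_bounds _ _ Hv0) as B0.
  simpl in B1, B0.
  destruct (Rle_lt_dec (1/4)
              (Rabs (Nat.iter m (f_sigma k s w) x - Nat.iter m (f_sigma k s w) z0))) as [h|h].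
  - exists z0. split; auto. split; auto. exists m. exact h.
  - exists z1. split; auto. split; auto. exists m. rewrite He1. rewrite He0 in h. revert h.
    unfold Rabs. destruct (Rcase_abs _); destruct (Rcase_abs _); intros; lra.
Qed.

Lemma periodic_chain p q : (1 <= p)%nat -> subst_iter p q = [] ->
  exists X, X 0%nat = q /\ forall j, periodic_step_rel p (X j) (X (S j)).
Proof.
  intros Hp Hq.
  set (Step := fun (_ : nat) F F' => is_prefix (subst_iter p F) F -> periodic_step_rel p F F').
  assert (Hex : forall j F, exists F', Step j F F').
  { intros j F. destruct (classic (is_prefix (subst_iter p F) F)) as [h|h].
    - destruct (periodic_step p F Hp h) as [F' HF']. exists F'. intros _. exact HF'.
    - exists F. intro; contradiction. }
  destruct (build_sequence Step Hex q) as [X [HX0 HS]]. exists X. split; [exact HX0|].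
  assert (Inv : forall j, is_prefix (subst_iter p (X j)) (X j)).
  { induction j.
    - rewrite HX0, Hq. exists q. reflexivity.
    - exact (proj1 (proj2 (HS j IHj))). }
  intro j. exact (HS j (Inv j)).
Qed.

Lemma limit_word_interleaved X Y : chain X -> chain Y -> unbounded X ->
  (forall j, is_prefix (X j) (Y (S j))) -> limit_word X = limit_word Y.
Proof.
  intros HX HY Hunb HXY. apply functional_extensionality. intro i.
  destruct (Hunb (S i)) as [j Hj].
  rewrite (limit_word_nth X i j HX) by lia.
  rewrite (limit_word_nth Y i (S j) HY) by (pose proof (is_prefix_length _ _ (HXY j)); lia).
  apply is_prefix_nth; [apply HXY|lia].
Qed.

Lemma periodic_chain_orbit p X : (1 <= p)%nat ->
  (forall j, periodic_step_rel p (X j) (X (S j))) ->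
  Nat.iter p (f_sigma k s w) (inf_val (limit_word X)) = inf_val (limit_word X).
Proof.
  intros Hp HS.
  assert (HXY : forall j, is_prefix (X j) (subst_iter p (X (S j)))) by apply HS.
  assert (HX : chain X) by (intro j; eapply is_prefix_trans; [apply HXY|apply HS]).
  assert (Hlen : forall j, (j <= length (X j))%nat).
  { induction j; [lia|]. destruct (HS j) as [_ [_ [H _]]]. lia. }
  assert (Hunb : unbounded X) by (intros L; exists L; apply Hlen).
  assert (Hunb_p : unbounded (fun j => subst_iter p (X j))).
  { intros L. exists (S L). pose proof (is_prefix_length _ _ (HXY L)). specialize (Hlen L). lia. }
  rewrite (chain_orbit X p HX).
  - f_equal. symmetry. apply limit_word_interleaved; auto. apply chain_subst_iter, HX.
  - intros n Hn. split; [|apply (unbounded_lower_level X p); auto; lia].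
    destruct (classic w_has_one) as [Hone|Hnone].
    + apply new_ones_of_steps. intro j. apply (proj2 (proj2 (proj2 (HS j))) Hone n Hn).
    + apply new_ones_of_growing_images; [now apply zeros_erased|].
      apply (unbounded_lower_level X p (S n)); auto.
Qed.

Theorem f_sigma_dense_periodic : dense_periodic (f_sigma k s w).
Proof.
  intros y eps Hy Heps. destruct (approximating_word y eps Hy Heps) as [q Hq].
  destruct (erased_after q) as [p0 Hp0]. set (p := S p0).
  destruct (periodic_chain p q ltac:(unfold p; lia) (Hp0 p ltac:(unfold p; lia)))
    as [X [HX0 HS]].
  exists (inf_val (limit_word X)). split; [apply inf_val_in_I|]. split.
  - apply Hq. rewrite <- HX0. apply chain_prefix_of_limit.
    intro j. eapply is_prefix_trans; apply HS.
  - exists p. split; [unfold p; lia|]. apply periodic_chain_orbit; auto. unfold p; lia.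
Qed.

End Dynamics.

Theorem mainTheorem15 (k : nat) (s : nat -> bool -> list bool) (w : list bool) :
  (2 <= k)%nat ->
  erasing_with k s w ->
  eventually_erases k s ->
  w <> repeat true k ->
  optimal k s ->
  dense_orbit (f_sigma k s w) /\
  dense_periodic (f_sigma k s w) /\
  sensitive (f_sigma k s w).
Proof.
  intros Hk Her Hee _ Hopt.
  assert (Hk0 : (0 < k)%nat) by lia.
  split; [|split].
  - exact (f_sigma_dense_orbit k s Hk0 w Her Hopt Hee).
  - exact (f_sigma_dense_periodic k s Hk0 w Her Hopt Hee).
  - exact (f_sigma_sensitive k s Hk0 w Her Hopt Hee).
Qed.
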